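(* Let $(X,\to)$ be a transition system over $A$. For every preorder $R\in\mathit{Pre}(X)$ and $x_1,x_2\in X$: $(x_1,x_2)\in\beta_s(R)$ iff for all $a\in A$ and all $y_1\in\delta_a(x_1)$ there exists $y_2\in\delta_a(x_2)$ with $y_1\mathrel Ry_2$. Moreover, if the transition system is finitely branching, $\beta_s$ is continuous on $(\mathit{Pre}(X),\supseteq)$.
   Context: A transition system over $A$: $(X,\to)$ with $\to\subseteq X\times A\times X$; $\delta_a(x)=\{x'\mid x\xrightarrow{a}x'\}$; finitely branching means $\{(a,x')\mid x\xrightarrow{a}x'\}$ is finite for all $x$. $\mathit{Pre}(X)$ is the set of preorders on $X$, ordered by $\supseteq$; continuity means preserving suprema of well-ordered chains in this order (i.e. intersections of descending chains). $\Diamond_a(S)=\{x\mid\exists x'\in S\colon x\xrightarrow{a}x'\}$. $\alpha_s(\mathcal S)=\{(x_1,x_2)\mid\forall S\in\mathcal S\colon(x_1\in S\Rightarrow x_2\in S)\}$ for $\mathcal S\subseteq\mathcal P(X)$; $\gamma_s(R)=\{S\subseteq X\mid\forall s\in S\colon R[\{s\}]\subseteq S\}$ where $R[\{s\}]=\{y\mid (s,y)\in R\}$; $\mathit{lo}_s(\mathcal S)=\bigcup_{a\in A}\{\Diamond_a(S)\mid S\in\mathrm{cl}^\cap_f(\mathcal S)\}$, with $\mathrm{cl}^\cap_f$ the closure under finite intersections (including the empty intersection $X$); $\beta_s=\alpha_s\circ\mathit{lo}_s\circ\gamma_s$. *)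

From Stdlib Require Import List.
Import ListNotations.

Set Implicit Arguments.

(* A transition system over A on states X: trans x a x' means x --a--> x'. *)
Definition lts (X A : Type) := X -> A -> X -> Prop.

Section Defs.
Variables (X A : Type) (trans : lts X A).

Definition delta (a : A) (x : X) : X -> Prop := fun x' => trans x a x'.

Definition finitely_branching : Prop :=
  forall x, exists l : list (A * X),
    forall a x', trans x a x' <-> In (a, x') l.

Definition is_preorder (R : X -> X -> Prop) : Prop :=
  (forall x, R x x) /\ (forall x y z, R x y -> R y z -> R x z).

Definition Diamond (a : A) (S : X -> Prop) : X -> Prop :=
  fun x => exists x', S x' /\ trans x a x'.

Definition alpha_s (SS : (X -> Prop) -> Prop) : X -> X -> Prop :=
  fun x1 x2 => forall S, SS S -> S x1 -> S x2.

Definition gamma_s (R : X -> X -> Prop) : (X -> Prop) -> Prop :=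
  fun S => forall s, S s -> forall y, R s y -> S y.

(* closure under finite intersections (the empty intersection being X) *)
Definition cl_fin_inter (SS : (X -> Prop) -> Prop) : (X -> Prop) -> Prop :=
  fun S => exists l : list (X -> Prop),
    (forall T, In T l -> SS T) /\ S = (fun x => forall T, In T l -> T x).

Definition lo_s (SS : (X -> Prop) -> Prop) : (X -> Prop) -> Prop :=
  fun T => exists a S, cl_fin_inter SS S /\ T = Diamond a S.

Definition beta_s (R : X -> X -> Prop) : X -> X -> Prop :=
  alpha_s (lo_s (gamma_s R)).

End Defs.

(* Intersection of a family of relations (supremum in (Pre(X), ⊇)). *)
Definition rel_inter (X : Type) (C : (X -> X -> Prop) -> Prop) : X -> X -> Prop :=
  fun x y => forall R, C R -> R x y.

Definition rel_sub (X : Type) (R S : X -> X -> Prop) : Prop :=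
  forall x y, R x y -> S x y.

(* A nonempty well-ordered chain in (Pre(X), ⊇): a nonempty family of
   preorders, totally ordered by inclusion, such that every nonempty
   subfamily has a ⊇-least element (i.e. a member containing all others). *)
Definition wo_chain_Pre (X : Type) (C : (X -> X -> Prop) -> Prop) : Prop :=
  (forall R, C R -> is_preorder R) /\
  (exists R, C R) /\
  (forall R S, C R -> C S -> rel_sub R S \/ rel_sub S R) /\
  (forall D : (X -> X -> Prop) -> Prop,
     (forall R, D R -> C R) -> (exists R, D R) ->
     exists R0, D R0 /\ forall S, D S -> rel_sub S R0).

(* beta_s is continuous on (Pre(X), ⊇): it preserves suprema (= intersections)
   of nonempty well-ordered chains. *)
Definition beta_s_continuous (X A : Type) (trans : lts X A) : Prop :=
  forall C : (X -> X -> Prop) -> Prop, wo_chain_Pre C ->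
    forall x1 x2,
      beta_s trans (rel_inter C) x1 x2 <->
      rel_inter (fun T => exists R, C R /\ T = beta_s trans R) x1 x2.

(* A set closed under R-successors contains the R-upset of each of its
   points.  When R is a preorder the upset of y1 is such a set and contains
   y1, so testing beta_s against Diamond_a of it yields the transfer
   condition; conversely, the transfer condition keeps x2 in Diamond_a of
   every finite intersection of such sets.  For continuity, each member R of
   the chain yields an a-successor of x2 lying R-above y1.  Since x2 has
   finitely many a-successors and a chain cannot exclude each of finitely
   many points without one member excluding all of them, a single successor
   serves the whole chain. *)

From Stdlib Require Import List.
From Stdlib Require Import Classical.
Import ListNotations.

Set Implicit Arguments.

Section ChainFiniteMeet.
Variables (I Y : Type) (C : I -> Prop) (F : I -> Y -> Prop).
Hypothesis C_nonempty : exists i, C i.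
Hypothesis F_chain : forall i j, C i -> C j ->
  (forall y, F i y -> F j y) \/ (forall y, F j y -> F i y).

Lemma chain_avoids_list (l : list Y) :
  (forall y, In y l -> exists i, C i /\ ~ F i y) ->
  exists m, C m /\ forall y, In y l -> ~ F m y.
Proof.
  induction l as [|y l IH]; intros Havoid.
  - destruct C_nonempty as [m Hm]. exists m; split; [exact Hm | intros y []].
  - destruct IH as [m [Hm Hml]]; [intros z Hz; apply Havoid; right; exact Hz|].
    destruct (Havoid y (or_introl eq_refl)) as [i [Hi Hiy]].
    destruct (F_chain Hm Hi) as [Hmi | Him].
    + exists m; split; [exact Hm|].
      intros z [<- | Hz] Hmz; [exact (Hiy (Hmi y Hmz)) | exact (Hml z Hz Hmz)].
    + exists i; split; [exact Hi|].
      intros z [<- | Hz] Hiz; [exact (Hiy Hiz) | exact (Hml z Hz (Him z Hiz))].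
Qed.

Lemma chain_meets_list_inter (l : list Y) :
  (forall i, C i -> exists y, In y l /\ F i y) ->
  exists y, In y l /\ forall i, C i -> F i y.
Proof.
  intros Hmeet. apply NNPP; intros Hnone.
  destruct (chain_avoids_list l) as [m [Hm Hml]].
  - intros y Hy. apply NNPP; intros Hall. apply Hnone.
    exists y; split; [exact Hy|].
    intros i Hi. apply NNPP; intros Hiy. apply Hall. exists i; split; assumption.
  - destruct (Hmeet m Hm) as [y [Hy Hmy]]. exact (Hml y Hy Hmy).
Qed.

End ChainFiniteMeet.

Section BetaS.
Variables (X A : Type) (trans : lts X A).

Definition transfer (R : X -> X -> Prop) (x1 x2 : X) : Prop :=
  forall a y1, delta trans a x1 y1 -> exists y2, delta trans a x2 y2 /\ R y1 y2.

Lemma transfer_mono (R S : X -> X -> Prop) (x1 x2 : X) :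
  rel_sub R S -> transfer R x1 x2 -> transfer S x1 x2.
Proof.
  intros HRS Htr a y1 Hy1.
  destruct (Htr a y1 Hy1) as [y2 [Hy2 HR]].
  exists y2; split; [exact Hy2 | exact (HRS _ _ HR)].
Qed.

Lemma gamma_s_upset (R : X -> X -> Prop) (y : X) :
  (forall x y z, R x y -> R y z -> R x z) -> gamma_s R (R y).
Proof. intros Htrans s Hs z Hz. exact (Htrans _ _ _ Hs Hz). Qed.

Lemma gamma_s_cl_fin_inter (R : X -> X -> Prop) (S : X -> Prop) :
  cl_fin_inter (gamma_s R) S -> gamma_s R S.
Proof.
  intros [l [Hl ->]] s Hs y Hy T HT. exact (Hl T HT s (Hs T HT) y Hy).
Qed.

Lemma lo_s_Diamond_singleton (SS : (X -> Prop) -> Prop) (S : X -> Prop) (a : A) :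
  SS S -> lo_s trans SS (Diamond trans a (fun x => forall T, In T [S] -> T x)).
Proof.
  intros HS. exists a, (fun x => forall T, In T [S] -> T x); split; [|reflexivity].
  exists [S]; split; [intros T [<- | []]; exact HS | reflexivity].
Qed.

Lemma beta_s_transfer (R : X -> X -> Prop) (x1 x2 : X) :
  is_preorder R -> beta_s trans R x1 x2 -> transfer R x1 x2.
Proof.
  intros [Hrefl Htrans] Hbeta a y1 Hy1.
  assert (Hdia : Diamond trans a (fun x => forall T, In T [R y1] -> T x) x2).
  { apply Hbeta.
    - apply lo_s_Diamond_singleton, gamma_s_upset, Htrans.
    - exists y1; split; [intros T [<- | []]; exact (Hrefl y1) | exact Hy1]. }
  destruct Hdia as [y2 [Hup Hy2]].
  exists y2; split; [exact Hy2 | exact (Hup _ (or_introl eq_refl))].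
Qed.

Lemma transfer_beta_s (R : X -> X -> Prop) (x1 x2 : X) :
  transfer R x1 x2 -> beta_s trans R x1 x2.
Proof.
  intros Htr T [a [S [HS ->]]] [y1 [Hy1S Hy1]].
  destruct (Htr a y1 Hy1) as [y2 [Hy2 HR]].
  exists y2; split; [exact (gamma_s_cl_fin_inter HS y1 Hy1S y2 HR) | exact Hy2].
Qed.

Lemma beta_s_iff_transfer (R : X -> X -> Prop) (x1 x2 : X) :
  is_preorder R -> beta_s trans R x1 x2 <-> transfer R x1 x2.
Proof.
  intros HR; split; [exact (beta_s_transfer HR) | exact (@transfer_beta_s R x1 x2)].
Qed.

Lemma rel_inter_preorder (C : (X -> X -> Prop) -> Prop) :
  (forall R, C R -> is_preorder R) -> is_preorder (rel_inter C).
Proof.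
  intros Hpre; split.
  - intros x R HR. exact (proj1 (Hpre R HR) x).
  - intros x y z Hxy Hyz R HR. exact (proj2 (Hpre R HR) x y z (Hxy R HR) (Hyz R HR)).
Qed.

Lemma transfer_rel_inter_chain (C : (X -> X -> Prop) -> Prop) (x1 x2 : X) :
  finitely_branching trans ->
  (exists R, C R) ->
  (forall R S, C R -> C S -> rel_sub R S \/ rel_sub S R) ->
  (forall R, C R -> transfer R x1 x2) -> transfer (rel_inter C) x1 x2.
Proof.
  intros Hfb Hne Hchain Htr a y1 Hy1.
  destruct (Hfb x2) as [l Hl].
  destruct (@chain_meets_list_inter _ _ C
              (fun R y2 => delta trans a x2 y2 /\ R y1 y2) Hne)
    with (l := map snd l) as [y2 [_ Hall]].
  - intros R S HR HS.
    destruct (Hchain R S HR HS) as [HRS | HSR]; [left | right];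
      intros y [Hy Hrel]; split; auto.
  - intros R HR. destruct (Htr R HR a y1 Hy1) as [y2 [Hy2 Hrel]].
    exists y2; split; [|split; assumption].
    exact (in_map snd l (a, y2) (proj1 (Hl a y2) Hy2)).
  - destruct Hne as [R0 HR0].
    exists y2; split; [exact (proj1 (Hall R0 HR0)) |].
    intros R HR; exact (proj2 (Hall R HR)).
Qed.

Lemma beta_s_continuous_of_finitely_branching :
  finitely_branching trans -> beta_s_continuous trans.
Proof.
  intros Hfb C [Hpre [Hne [Hchain _]]] x1 x2.
  rewrite beta_s_iff_transfer by exact (rel_inter_preorder C Hpre); split.
  - intros Htr T [R [HR ->]].
    apply transfer_beta_s.
    exact (transfer_mono (fun x y H => H R HR) Htr).
  - intros Hbeta. apply transfer_rel_inter_chain; [exact Hfb | exact Hne | exact Hchain |].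
    intros R HR. apply (beta_s_transfer (Hpre R HR)). apply Hbeta. exists R; auto.
Qed.

End BetaS.

Theorem mainTheorem7 (X A : Type) (trans : lts X A) :
  (forall R : X -> X -> Prop, is_preorder R ->
     forall x1 x2 : X,
       beta_s trans R x1 x2 <->
       (forall (a : A) (y1 : X), delta trans a x1 y1 ->
          exists y2, delta trans a x2 y2 /\ R y1 y2)) /\
  (finitely_branching trans -> beta_s_continuous trans).
Proof.
  split.
  - intros R HR x1 x2. exact (beta_s_iff_transfer trans x1 x2 HR).
  - exact (@beta_s_continuous_of_finitely_branching X A trans).
Qed.
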